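(* Let $\mathcal{A}$ be an abelian category with an amplitude $\alpha$. Then for all $A,B\in\operatorname{ob}\mathcal{A}$, \[ |\alpha(A)-\alpha(B)|\le\mathrm{d}_\alpha(A,B), \] i.e. $\alpha$ is $1$-Lipschitz with respect to the path metric $\mathrm{d}_\alpha$.
   Context: An amplitude on an abelian category $\mathcal{A}$ is a function $\alpha\colon\operatorname{ob}\mathcal{A}\to[0,\infty]$ with $\alpha(0)=0$ such that for every short exact sequence $0\to A\to B\to C\to0$, $\alpha(A)\le\alpha(B)$, $\alpha(C)\le\alpha(B)$ and $\alpha(B)\le\alpha(A)+\alpha(C)$. The cost of a zigzag $A\xleftarrow{\gamma_1}C_1\xrightarrow{\gamma_2}\cdots\xleftarrow{\gamma_{n-1}}C_n\xrightarrow{\gamma_n}B$ is $\sum_i\alpha(\ker\gamma_i)+\alpha(\operatorname{coker}\gamma_i)$; the path metric $\mathrm{d}_\alpha(A,B)$ is the infimum of costs over all zigzags between $A$ and $B$ ($\inf\emptyset=\infty$). *)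

From HB Require Import structures.
From mathcomp Require Import all_boot all_order all_algebra.
From mathcomp Require Import boolp classical_sets reals constructive_ereal ereal.
Set Implicit Arguments.
Unset Strict Implicit.
Unset Printing Implicit Defensive.
Import Order.TTheory GRing.Theory Num.Theory.
Local Open Scope ring_scope.

Record preadditive := Preadditive {
  Obj : Type;
  Hom : Obj -> Obj -> zmodType;
  comp : forall X Y Z, Hom Y Z -> Hom X Y -> Hom X Z;
  idm : forall X, Hom X X;
  comp_assoc : forall W X Y Z (h : Hom Y Z) (g : Hom X Y) (f : Hom W X),
      comp h (comp g f) = comp (comp h g) f;
  comp_id_l : forall X Y (f : Hom X Y), comp (idm Y) f = f;
  comp_id_r : forall X Y (f : Hom X Y), comp f (idm X) = f;
  comp_addl : forall X Y Z (g1 g2 : Hom Y Z) (f : Hom X Y),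
      comp (g1 + g2) f = comp g1 f + comp g2 f;
  comp_addr : forall X Y Z (g : Hom Y Z) (f1 f2 : Hom X Y),
      comp g (f1 + f2) = comp g f1 + comp g f2
}.
Arguments comp {p X Y Z}.
Arguments Hom {p}.
Arguments idm {p}.

Section CatDefs.
Variable C : preadditive.

Definition is_zero_obj (Z : Obj C) : Prop :=
  (forall X (f g : Hom (p:=C) X Z), f = g) /\ (forall X (f g : Hom (p:=C) Z X), f = g).

Definition is_mono X Y (f : Hom (p:=C) X Y) : Prop :=
  forall W (g h : Hom (p:=C) W X), comp f g = comp f h -> g = h.

Definition is_epi X Y (f : Hom (p:=C) X Y) : Prop :=
  forall W (g h : Hom (p:=C) Y W), comp g f = comp h f -> g = h.

Definition is_kernel X Y (f : Hom (p:=C) X Y) (K : Obj C) (k : Hom (p:=C) K X) : Prop :=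
  comp f k = 0 /\
  forall W (g : Hom (p:=C) W X), comp f g = 0 ->
    exists u : Hom (p:=C) W K, comp k u = g /\ forall u', comp k u' = g -> u' = u.

Definition is_cokernel X Y (f : Hom (p:=C) X Y) (Q : Obj C) (q : Hom (p:=C) Y Q) : Prop :=
  comp q f = 0 /\
  forall W (g : Hom (p:=C) Y W), comp g f = 0 ->
    exists u : Hom (p:=C) Q W, comp u q = g /\ forall u', comp u' q = g -> u' = u.

Definition is_biproduct X Y (S : Obj C) (i1 : Hom (p:=C) X S) (i2 : Hom (p:=C) Y S)
  (p1 : Hom (p:=C) S X) (p2 : Hom (p:=C) S Y) : Prop :=
  [/\ comp p1 i1 = idm X, comp p2 i2 = idm Y, comp p1 i2 = 0, comp p2 i1 = 0
    & comp i1 p1 + comp i2 p2 = idm S].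
End CatDefs.

Record abelian := Abelian {
  abcat :> preadditive;
  ker_obj : forall X Y (f : Hom (p:=abcat) X Y), Obj abcat;
  ker_map : forall X Y (f : Hom (p:=abcat) X Y), Hom (p:=abcat) (ker_obj f) X;
  ker_spec : forall X Y (f : Hom (p:=abcat) X Y), is_kernel f (ker_map f);
  coker_obj : forall X Y (f : Hom (p:=abcat) X Y), Obj abcat;
  coker_map : forall X Y (f : Hom (p:=abcat) X Y), Hom (p:=abcat) Y (coker_obj f);
  coker_spec : forall X Y (f : Hom (p:=abcat) X Y), is_cokernel f (coker_map f);
  has_zero_obj : exists Z : Obj abcat, @is_zero_obj abcat Z;
  has_biproducts : forall X Y, exists S i1 i2 p1 p2,
      @is_biproduct abcat X Y S i1 i2 p1 p2;
  mono_normal : forall X Y (f : Hom (p:=abcat) X Y), is_mono f ->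
      exists Z (g : Hom (p:=abcat) Y Z), is_kernel g f;
  epi_normal : forall X Y (f : Hom (p:=abcat) X Y), is_epi f ->
      exists Z (g : Hom (p:=abcat) Z X), is_cokernel g f
}.

Section Amplitude.
Variable R : realType.
Variable A : abelian.
Local Open Scope ereal_scope.

Definition short_exact X Y Z (f : Hom (p:=A) X Y) (g : Hom (p:=A) Y Z) : Prop :=
  is_kernel g f /\ is_cokernel f g.

Definition is_amplitude (alpha : Obj A -> \bar R) : Prop :=
  [/\ forall X, 0 <= alpha X,
      forall Z : Obj A, @is_zero_obj A Z -> alpha Z = 0 &
      forall X Y Z (f : Hom (p:=A) X Y) (g : Hom (p:=A) Y Z), short_exact f g ->
        [/\ alpha X <= alpha Y, alpha Z <= alpha Y
          & alpha Y <= alpha X + alpha Z]].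

Inductive zigzag : Obj A -> Obj A -> Type :=
| zz_nil X : zigzag X X
| zz_fwd X Y Z (f : Hom (p:=A) X Y) (p : zigzag Y Z) : zigzag X Z
| zz_bwd X Y Z (f : Hom (p:=A) Y X) (p : zigzag Y Z) : zigzag X Z.

Definition arrow_cost (alpha : Obj A -> \bar R) X Y (f : Hom (p:=A) X Y) : \bar R :=
  alpha (ker_obj f) + alpha (coker_obj f).

Fixpoint zz_cost (alpha : Obj A -> \bar R) X Z (p : zigzag X Z) : \bar R :=
  match p with
  | zz_nil _ => 0
  | zz_fwd _ _ _ f q => arrow_cost alpha f + zz_cost alpha q
  | zz_bwd _ _ _ f q => arrow_cost alpha f + zz_cost alpha q
  end.

(* path metric: infimum of costs (inf of the empty set is +oo) *)
Definition path_metric (alpha : Obj A -> \bar R) (X Y : Obj A) : \bar R :=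
  ereal_inf [set zz_cost alpha p | p in [set: zigzag X Y]].
End Amplitude.

From Pilot Require Import Defs.
From mathcomp Require Import all_boot all_order all_algebra.
From mathcomp Require Import boolp classical_sets reals constructive_ereal ereal.
(* Re-imported so that [comp], [Hom] and [idm] denote the category's rather
   than ssrfun's composition, vector's [Hom] and morphism's [idm]. *)
Import Defs.
Import Order.TTheory GRing.Theory Num.Theory.

Set Implicit Arguments.
Unset Strict Implicit.
Unset Printing Implicit Defensive.

(** Factor [f : X -> Y] through its image [I = ker (coker f)] as an epi
   [X -> I] followed by a mono [I -> Y].  This yields the short exact
   sequences [0 -> ker f -> X -> I -> 0] and [0 -> I -> Y -> coker f -> 0],
   so the axioms of an amplitude give
   [alpha X <= alpha (ker f) + alpha I <= alpha (ker f) + alpha Y] and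
   [alpha Y <= alpha I + alpha (coker f) <= alpha X + alpha (coker f)].
   Hence [|alpha X - alpha Y|] is at most the cost of [f]; summing along a
   zigzag and taking the infimum over zigzags gives the theorem. *)

Section Preadditive.
Variable C : preadditive.
Local Open Scope ring_scope.

Lemma comp0l (X Y Z : Obj C) (f : Hom X Y) : comp (0 : Hom Y Z) f = 0.
Proof. by apply: (addrI (comp 0 f)); rewrite -comp_addl !addr0. Qed.

Lemma comp0r (X Y Z : Obj C) (g : Hom Y Z) : comp g (0 : Hom X Y) = 0.
Proof. by apply: (addrI (comp g 0)); rewrite -comp_addr !addr0. Qed.

Lemma kernel_mono (X Y K : Obj C) (f : Hom X Y) (k : Hom K X) :
  is_kernel f k -> is_mono k.
Proof.
move=> [fk0 univ] W g h kgh.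
have fkg0 : comp f (comp k g) = 0 by rewrite comp_assoc fk0 comp0l.
have [u [_ uniq_u]] := univ W (comp k g) fkg0.
by rewrite (uniq_u g erefl) (uniq_u h (esym kgh)).
Qed.

Lemma cokernel_epi (X Y Q : Obj C) (f : Hom X Y) (q : Hom Y Q) :
  is_cokernel f q -> is_epi q.
Proof.
move=> [qf0 univ] W g h gqh.
have gqf0 : comp (comp g q) f = 0 by rewrite -comp_assoc qf0 comp0r.
have [u [_ uniq_u]] := univ W (comp g q) gqf0.
by rewrite (uniq_u g erefl) (uniq_u h (esym gqh)).
Qed.

Lemma epi_of_cokernel0 (X Y Q : Obj C) (e : Hom X Y) (c : Hom Y Q) :
  is_cokernel e c -> c = 0 -> is_epi e.
Proof.
move=> [_ univ] c0 W g h geh.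
have ghe0 : comp (g - h) e = 0.
  by apply: (addIr (comp h e)); rewrite -comp_addl subrK add0r.
have [v [vc _]] := univ W (g - h) ghe0.
by apply/eqP; rewrite -subr_eq0 -vc c0 comp0r.
Qed.

Lemma mono_comp (X Y Z : Obj C) (g : Hom Y Z) (f : Hom X Y) :
  is_mono g -> is_mono f -> is_mono (comp g f).
Proof. by move=> mg mf W u v e; apply/mf/mg; rewrite !comp_assoc. Qed.

End Preadditive.

Section Abelian.
Variable A : abelian.
Local Open Scope ring_scope.

Lemma cokernel_of_epi_kernel (K Y Q : Obj A) (k : Hom K Y) (q : Hom Y Q) :
  is_epi q -> is_kernel q k -> is_cokernel k q.
Proof.
move=> epi_q [qk0 univ]; have [Z [g [qg0 univ_q]]] := epi_normal epi_q.
have [v [kv _]] := univ _ g qg0.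
split=> // W w wk0; apply: univ_q.
by rewrite -kv comp_assoc wk0 comp0l.
Qed.

Definition im_obj (X Y : Obj A) (f : Hom X Y) : Obj A := ker_obj (coker_map f).

Definition im_map (X Y : Obj A) (f : Hom X Y) : Hom (im_obj f) Y :=
  ker_map (coker_map f).

Lemma im_map_factor (X Y : Obj A) (f : Hom X Y) :
  exists e : Hom X (im_obj f), comp (im_map f) e = f.
Proof.
have [_ univ] := ker_spec (coker_map f).
have [e [ief _]] := univ _ f (coker_spec f).1.
by exists e.
Qed.

Lemma im_map_mono (X Y : Obj A) (f : Hom X Y) : is_mono (im_map f).
Proof. exact: kernel_mono (ker_spec _). Qed.

(* With [m] a kernel of [coker e], the mono [im_map f \o m] is the kernel
   of some [g]; then [g] kills [f], hence [im_map f], so [im_map f] factors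
   through [im_map f \o m], forcing [m] to be split epi and [coker e = 0]. *)
Lemma im_factor_epi (X Y : Obj A) (f : Hom X Y) (e : Hom X (im_obj f)) :
  comp (im_map f) e = f -> is_epi e.
Proof.
move=> ief; set i := im_map f; set m := ker_map (coker_map e).
have [qi0 _] := ker_spec (coker_map f).
have [_ univ_q] := coker_spec f.
have [cm0 univ_m] := ker_spec (coker_map e).
have [e' [me' _]] := univ_m _ e (coker_spec e).1.
have [Z [g [gim univ_im]]] :=
  mono_normal (mono_comp (im_map_mono (f := f)) (kernel_mono (ker_spec (coker_map e)))).
have gf0 : comp g f = 0.
  by rewrite -ief -me' comp_assoc comp_assoc -(comp_assoc g) gim !comp0l.
have [t [tq _]] := univ_q _ g gf0.
have gi0 : comp g i = 0 by rewrite -tq -comp_assoc qi0 comp0r.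
have [s [ims _]] := univ_im _ i gi0.
have ms : comp m s = idm _.
  by apply: im_map_mono; rewrite comp_assoc ims comp_id_r.
apply: epi_of_cokernel0 (coker_spec e) _.
by rewrite -(comp_id_r (coker_map e)) -ms comp_assoc cm0 comp0l.
Qed.

Lemma im_factor_kernel (X Y : Obj A) (f : Hom X Y) (e : Hom X (im_obj f)) :
  comp (im_map f) e = f -> is_kernel e (ker_map f).
Proof.
move=> ief; have [fk0 univ] := ker_spec f; split.
  by apply: im_map_mono; rewrite comp_assoc ief fk0 comp0r.
by move=> W g eg0; apply: univ; rewrite -ief -comp_assoc eg0 comp0r.
Qed.

Lemma short_exact_coim (X Y : Obj A) (f : Hom X Y) (e : Hom X (im_obj f)) :
  comp (im_map f) e = f -> short_exact (ker_map f) e.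
Proof.
move=> ief; have ker_e := im_factor_kernel ief.
by split=> //; apply: cokernel_of_epi_kernel (im_factor_epi ief) ker_e.
Qed.

Lemma short_exact_im (X Y : Obj A) (f : Hom X Y) :
  short_exact (im_map f) (coker_map f).
Proof.
split; first exact: ker_spec.
exact: cokernel_of_epi_kernel (cokernel_epi (coker_spec f)) (ker_spec _).
Qed.

End Abelian.

Local Open Scope ereal_scope.

Lemma leeD_ereal_inf (R : realType) (a b : \bar R) (S : set (\bar R)) :
  0 <= b -> (forall c, S c -> 0 <= c) ->
  (forall c, S c -> a <= b + c) -> a <= b + ereal_inf S.
Proof.
move=> b0 S_ge0 aS.
have inf_ge0 : 0 <= ereal_inf S by apply/ereal_infP.
case: b b0 aS => [r | | //] b0 aS.
- rewrite -leeBlDl //; apply/ereal_infP => c Sc.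
  by rewrite leeBlDl //; apply: aS.
- by rewrite addye ?leey // gt_eqF // (lt_le_trans _ inf_ge0) ?ltNy0.
Qed.

Lemma leeD_trans (R : realType) (x y z a c : \bar R) :
  x <= y + a -> y <= z + c -> x <= z + (a + c).
Proof.
move=> xy yz; apply: (le_trans xy); apply: (le_trans (leeD2r a yz)).
by rewrite -addeA (addeC c).
Qed.

Section Amplitude.
Variables (R : realType) (A : abelian) (alpha : Obj A -> \bar R).
Hypothesis amp : is_amplitude alpha.

Lemma amplitude_ge0 (X : Obj A) : 0 <= alpha X.
Proof. by case: amp. Qed.

Lemma zz_cost_ge0 (X Z : Obj A) (p : zigzag X Z) : 0 <= zz_cost alpha p.
Proof.
by elim: p => {X Z} [//|X Y Z f p IH|X Y Z f p IH] /=;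
  rewrite !adde_ge0 ?amplitude_ge0.
Qed.

Lemma amplitude_arrow_le (X Y : Obj A) (f : Hom X Y) :
  alpha X <= alpha Y + arrow_cost alpha f /\
  alpha Y <= alpha X + arrow_cost alpha f.
Proof.
have [e ief] := im_map_factor f.
have [_ _ amp_exact] := amp.
have [_ im_le_X X_le] := amp_exact _ _ _ _ _ (short_exact_coim ief).
have [im_le_Y _ Y_le] := amp_exact _ _ _ _ _ (short_exact_im f).
rewrite /arrow_cost; split.
- apply: (le_trans X_le); rewrite addeCA; apply: leeD2l.
  by apply: (le_trans im_le_Y); rewrite leeDl ?amplitude_ge0.
- apply: (le_trans Y_le); rewrite addeA; apply: leeD2r.
  by apply: (le_trans im_le_X); rewrite leeDl ?amplitude_ge0.
Qed.

Lemma amplitude_zigzag_le (X Z : Obj A) (p : zigzag X Z) :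
  alpha X <= alpha Z + zz_cost alpha p /\
  alpha Z <= alpha X + zz_cost alpha p.
Proof.
elim: p => {X Z} [X|X Y Z f p [IH1 IH2]|X Y Z f p [IH1 IH2]] /=.
- by rewrite adde0.
- have [le1 le2] := amplitude_arrow_le f; split; first exact: leeD_trans le1 IH1.
  by rewrite [X in _ <= _ + X]addeC; apply: leeD_trans IH2 le2.
- have [le1 le2] := amplitude_arrow_le f; split; first exact: leeD_trans le2 IH1.
  by rewrite [X in _ <= _ + X]addeC; apply: leeD_trans IH2 le1.
Qed.

End Amplitude.

Theorem mainTheorem6 (R : realType) (A : abelian) (alpha : Obj A -> \bar R) :
  is_amplitude alpha ->
  forall X Y : Obj A,
    alpha X <= alpha Y + path_metric alpha X Y /\
    alpha Y <= alpha X + path_metric alpha X Y.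
Proof.
move=> amp X Y; split; apply: leeD_ereal_inf => [|_ [p _ <-]|_ [p _ <-]];
  rewrite ?(amplitude_ge0 amp) ?(zz_cost_ge0 amp) //;
  by have [] := amplitude_zigzag_le amp p.
Qed.
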